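(* Consider the setting and framework described in the context, with arbitrary learning rates $\alpha_k\in(0,1]$, $\alpha_1=1$, and arbitrary policy sequences. Then for all $k\ge 1$ and $h\in[H]$, $$\delta_h^k\le \sum_{t=1}^k\alpha_k^t\,\delta_{h+1}^t+\mathrm{reg}_{h+1}^k .$$ Suppose moreover that $\alpha_k=\frac{H+1}{H+k}$ for all $k\ge1$, and that $(\mathrm{reg}^k)_{k\ge1}$ is a sequence of nonnegative reals, non-increasing in $k$, with $\mathrm{reg}^k\ge \mathrm{reg}_h^k$ for all $h\in[H+1]$ and $k\ge 1$. Then for all $k\ge1$ and $h\in[H+1]$, $$\delta_h^k\le \frac{2H}{k}\sum_{t=1}^k \mathrm{reg}^t .$$
   Context: Setting. A finite-horizon two-player zero-sum Markov game with finite state set $\mathcal S$, finite action sets $\mathcal A$ (max-player, $A=|\mathcal A|$) and $\mathcal B$ (min-player, $B=|\mathcal B|$), horizon $H\ge 1$, reward functions $r_h:\mathcal S\times\mathcal A\times\mathcal B\to[0,1]$ and transition kernels $\mathbb P_h(\cdot\mid s,a,b)$ on $\mathcal S$, $h\in[H]$. For $f:\mathcal S\to\mathbb R$, $[\mathbb P_h f](s,a,b)=\sum_{s'}\mathbb P_h(s'\mid s,a,b)f(s')$. For $Q:\mathcal A\times\mathcal B\to\mathbb R$, $x\in\Delta_{\mathcal A}$, $y\in\Delta_{\mathcal B}$, write $\langle Q,x\times y\rangle=\sum_{a,b}x(a)y(b)Q(a,b)$. Optimal values: $Q^\star_{H+1}\equiv 0$, and for $h=H,\dots,1$, $V^\star_{h+1}(s)=\max_{x\in\Delta_{\mathcal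 A}}\min_{y\in\Delta_{\mathcal B}}\langle Q^\star_{h+1}(s,\cdot,\cdot),x\times y\rangle$ (with $V^\star_{H+1}\equiv0$) and $Q^\star_h=r_h+\mathbb P_hV^\star_{h+1}$. Framework. Given learning rates $\alpha_k\in(0,1]$ ($k\ge1$) with $\alpha_1=1$ and arbitrary Markov policies $\mu_h^k(\cdot\mid s)\in\Delta_{\mathcal A}$, $\nu_h^k(\cdot\mid s)\in\Delta_{\mathcal B}$ ($k\ge1$, $h\in[H]$, $s\in\mathcal S$), define $Q_{H+1}^k\equiv 0$ for all $k$, $Q_h^0\equiv H-h+1$, and for $k\ge1$, $h=H,\dots,1$: $$Q_h^k(s,a,b)=(1-\alpha_k)Q_h^{k-1}(s,a,b)+\alpha_k\Big(r_h(s,a,b)+\sum_{s'}\mathbb P_h(s'\mid s,a,b)\langle Q_{h+1}^k(s',\cdot,\cdot),\mu_{h+1}^k(\cdot\mid s')\times\nu_{h+1}^k(\cdot\mid s')\rangle\Big)$$ (for $h=H$ the inner product term is $0$). Let $\alpha_k^t=\alpha_t\prod_{j=t+1}^k(1-\alpha_j)$ for $1\le t\le k$. Weighted regrets: for $h\in[H]$, $\mathrm{reg}_{h,\mu}^k(s)=\max_{z\in\Delta_{\mathcal A}}\sum_{t=1}^k\alpha_k^t\langle Q_h^t(s,\cdot,\cdot),z\times\nu_h^t(\cdot|s)\rangle-\sum_{t=1}^k\alpha_k^t\langle Q_h^t(s,\cdot,\cdot),\mu_h^t(\cdot|s)\times\nu_h^t(\cdot|s)\rangle$, $\mathrm{reg}_{h,\nu}^k(s)=\sum_{t=1}^k\alpha_k^t\langle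 Q_h^t(s,\cdot,\cdot),\mu_h^t(\cdot|s)\times\nu_h^t(\cdot|s)\rangle-\min_{z\in\Delta_{\mathcal B}}\sum_{t=1}^k\alpha_k^t\langle Q_h^t(s,\cdot,\cdot),\mu_h^t(\cdot|s)\times z\rangle$, $\mathrm{reg}_h^k=\max_{s}\max\{\mathrm{reg}_{h,\mu}^k(s),\mathrm{reg}_{h,\nu}^k(s)\}$, and $\mathrm{reg}_{H+1}^k:=0$. Value estimation error: $\delta_h^k=\max_{s,a,b}|Q_h^k(s,a,b)-Q_h^\star(s,a,b)|$ (so $\delta_{H+1}^k=0$). *)

From mathcomp Require Import all_boot all_order all_algebra.
From mathcomp Require Import boolp classical_sets reals.
Set Implicit Arguments. Unset Strict Implicit. Unset Printing Implicit Defensive.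
Import Order.TTheory GRing.Theory Num.Theory.
Local Open Scope ring_scope.
Local Open Scope classical_set_scope.

Section MG.
Variables (R : realType) (S A B : finType) (H : nat).

Definition simplex (T : finType) : set (T -> R) :=
  [set x | (forall a, 0 <= x a) /\ \sum_a x a = 1].
Arguments simplex T : clear implicits.

Definition ip (Q : A -> B -> R) (x : A -> R) (y : B -> R) : R :=
  \sum_a \sum_b x a * y b * Q a b.

Definition Pf (P : nat -> S -> A -> B -> S -> R) (h : nat) (f : S -> R)
  (s : S) (a : A) (b : B) : R := \sum_s' P h s a b s' * f s'.

(* Optimal Q-functions, by backward recursion on d = H+1-h. *)
Fixpoint Qstar_aux (r : nat -> S -> A -> B -> R) (P : nat -> S -> A -> B -> S -> R)
  (d : nat) : S -> A -> B -> R :=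
  match d with
  | 0 => fun _ _ _ => 0
  | d'.+1 =>
      let h := (H - d')%N in
      let Qn := Qstar_aux r P d' in
      let Vn := fun s' : S =>
        sup [set (inf [set ip (Qn s') x y | y in simplex B]) | x in simplex A] in
      fun s a b => r h s a b + Pf P h Vn s a b
  end.

Definition Qstar r P (h : nat) : S -> A -> B -> R := Qstar_aux r P (H.+1 - h).

Fixpoint Qk_aux (r : nat -> S -> A -> B -> R) (P : nat -> S -> A -> B -> S -> R)
  (alpha : nat -> R) (mu : nat -> nat -> S -> A -> R) (nu : nat -> nat -> S -> B -> R)
  (k : nat) (prev : nat -> S -> A -> B -> R) (d : nat) : S -> A -> B -> R :=
  match d with
  | 0 => fun _ _ _ => 0
  | d'.+1 =>
      let h := (H - d')%N in
      let Qn := Qk_aux r P alpha mu nu k prev d' in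
      fun s a b =>
        (1 - alpha k) * prev h s a b
        + alpha k * (r h s a b
             + Pf P h (fun s' => ip (Qn s') (mu k h.+1 s') (nu k h.+1 s')) s a b)
  end.

Fixpoint Qk r P alpha mu nu (k : nat) : nat -> S -> A -> B -> R :=
  match k with
  | 0 => fun h _ _ _ => (H.+1 - h)%:R
  | k'.+1 => fun h => Qk_aux r P alpha mu nu k'.+1 (Qk r P alpha mu nu k') (H.+1 - h)
  end.

Definition alphakt (alpha : nat -> R) (k t : nat) : R :=
  alpha t * \prod_(t.+1 <= j < k.+1) (1 - alpha j).

Definition reg_mu r P alpha mu nu (h k : nat) (s : S) : R :=
  sup [set \sum_(1 <= t < k.+1) alphakt alpha k t
             * ip (Qk r P alpha mu nu t h s) z (nu t h s) | z in simplex A]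
  - \sum_(1 <= t < k.+1) alphakt alpha k t
             * ip (Qk r P alpha mu nu t h s) (mu t h s) (nu t h s).

Definition reg_nu r P alpha mu nu (h k : nat) (s : S) : R :=
  \sum_(1 <= t < k.+1) alphakt alpha k t
             * ip (Qk r P alpha mu nu t h s) (mu t h s) (nu t h s)
  - inf [set \sum_(1 <= t < k.+1) alphakt alpha k t
             * ip (Qk r P alpha mu nu t h s) (mu t h s) z | z in simplex B].

Definition reg r P alpha mu nu (h k : nat) : R :=
  if h == H.+1 then 0 else
  sup [set Num.max (reg_mu r P alpha mu nu h k s) (reg_nu r P alpha mu nu h k s)
      | s in [set: S]].

Definition delta r P alpha mu nu (h k : nat) : R :=
  \big[Num.max/0]_(s : S) \big[Num.max/0]_(a : A) \big[Num.max/0]_(b : B)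
    `|Qk r P alpha mu nu k h s a b - Qstar r P h s a b|.

End MG.
Arguments simplex {R} T.

(* Unrolling the update gives Q_h^k = sum_t alpha_k^t (r_h + P_h V_{h+1}^t) with weights summing
   to one, where V_{h+1}^t = <Q_{h+1}^t, mu^t x nu^t>; hence Q_h^k - Q*_h is P_h applied to
   sum_t alpha_k^t V_{h+1}^t - V*_{h+1}.  At each state this weighted play is an approximate value
   of the matrix game Q*_{h+1}: each Q_{h+1}^t is entrywise within delta_{h+1}^t of Q*_{h+1}, and
   the averaged strategies sum_t alpha_k^t mu^t and sum_t alpha_k^t nu^t witness, up to the
   weighted regrets, that the play is within sum_t alpha_k^t delta_{h+1}^t + reg_{h+1}^k of the
   game value.
   For alpha_k = (H+1)/(H+k) the weights map running means S_t/t of the cumulative regret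
   S_k = sum_{t<=k} reg^t to at most (1 + 1/H) S_k/k, and reg^k <= S_k/k by monotonicity, so
   backward induction gives delta_h^k <= H ((1 + 1/H)^(H+1-h) - 1) S_k/k <= 2H S_k/k,
   using (1 + 1/H)^H <= 3. *)

From mathcomp Require Import all_boot all_order all_algebra.
From mathcomp Require Import boolp classical_sets reals.
From mathcomp Require Import ring lra.
Set Implicit Arguments. Unset Strict Implicit. Unset Printing Implicit Defensive.
Import Order.TTheory GRing.Theory Num.Theory.
Local Open Scope ring_scope.

Section ImageBounds.
Variables (R : realType) (T : Type) (D : set T).
Local Open Scope classical_set_scope.

Lemma le_sup_image (f : T -> R) x M :
  D x -> (forall y, D y -> f y <= M) -> f x <= sup (f @` D).
Proof.
move=> Dx fM; apply: ub_le_sup; last by exists x.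
by exists M => _ [y Dy <-]; exact: fM.
Qed.

Lemma sup_image_le (f : T -> R) c :
  (exists x, D x) -> (forall x, D x -> f x <= c) -> sup (f @` D) <= c.
Proof.
move=> [x Dx] fc; apply: ge_sup; first by exists (f x), x.
by move=> _ [y Dy <-]; exact: fc.
Qed.

Lemma inf_image_le (f : T -> R) x M :
  D x -> (forall y, D y -> M <= f y) -> inf (f @` D) <= f x.
Proof.
move=> Dx fM; apply: ge_inf; last by exists x.
by exists M => _ [y Dy <-]; exact: fM.
Qed.

Lemma le_inf_image (f : T -> R) c :
  (exists x, D x) -> (forall x, D x -> c <= f x) -> c <= inf (f @` D).
Proof.
move=> [x Dx] fc; apply: lb_le_inf; first by exists (f x), x.
by move=> _ [y Dy <-]; exact: fc.
Qed.

Lemma sup_image_leD (f g : T -> R) c M : (exists x, D x) ->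
  (forall x, D x -> g x <= M) -> (forall x, D x -> f x <= g x + c) ->
  sup (f @` D) <= sup (g @` D) + c.
Proof.
move=> D0 gM fg; apply: sup_image_le => // x Dx.
by rewrite -lerBlDr; apply: le_trans _ (le_sup_image Dx gM); rewrite lerBlDr fg.
Qed.

Lemma inf_image_leD (f g : T -> R) c M : (exists x, D x) ->
  (forall x, D x -> M <= f x) -> (forall x, D x -> f x <= g x + c) ->
  inf (f @` D) <= inf (g @` D) + c.
Proof.
move=> D0 Mf fg; rewrite -lerBlDr; apply: le_inf_image => // x Dx.
by rewrite lerBlDr; apply: le_trans (inf_image_le Dx Mf) (fg x Dx).
Qed.

Lemma sup_image_cst0 : sup [set (0 : R) | _ in D] = 0.
Proof. by rewrite set_cst; case: ifP => _; [exact: sup0 | exact: sup1]. Qed.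

Lemma inf_image_cst0 : inf [set (0 : R) | _ in D] = 0.
Proof. by rewrite set_cst; case: ifP => _; [exact: inf0 | exact: inf1]. Qed.

End ImageBounds.

Lemma simplex_avg (R : realType) (T : finType) (I : eqType) (s : seq I)
    (w : I -> R) (x : I -> T -> R) :
  {in s, forall t, 0 <= w t} -> \sum_(t <- s) w t = 1 ->
  {in s, forall t, simplex T (x t)} ->
  simplex T (fun a => \sum_(t <- s) w t * x t a).
Proof.
move=> w0 w1 xs; split=> [a|].
  by rewrite big_seq sumr_ge0 // => t st; have [x0 _] := xs t st; rewrite mulr_ge0 ?w0.
rewrite exchange_big -w1 big_seq [RHS]big_seq; apply: eq_bigr => t st.
by have [_ x1] := xs t st; rewrite -mulr_sumr x1 mulr1.
Qed.

Section InnerProduct.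
Variables (R : realType) (A B : finType).
Implicit Types (Q : A -> B -> R) (x : A -> R) (y : B -> R).

Lemma ip_norm_le Q x y c : (forall a b, `|Q a b| <= c) ->
  simplex A x -> simplex B y -> `|ip Q x y| <= c.
Proof.
move=> Qc [x0 x1] [y0 y1]; rewrite /ip.
have -> : c = \sum_a x a * c by rewrite -mulr_suml x1 mul1r.
apply: le_trans (ler_norm_sum _ _ _) _; apply: ler_sum => a _.
have -> : x a * c = \sum_b x a * y b * c by rewrite -mulr_suml -mulr_sumr y1 mulr1.
apply: le_trans (ler_norm_sum _ _ _) _; apply: ler_sum => b _.
by rewrite normrM ger0_norm ?mulr_ge0 // ler_wpM2l ?mulr_ge0.
Qed.

Lemma ip_norm_le_l1 Q x y : simplex A x -> simplex B y ->
  `|ip Q x y| <= \sum_a \sum_b `|Q a b|.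
Proof.
move=> sx sy; apply: ip_norm_le => // a b.
rewrite (bigD1 a) //= (bigD1 b) //= -addrA lerDl addr_ge0 ?sumr_ge0 // => a' _.
exact: sumr_ge0.
Qed.

Lemma ipB Q1 Q2 x y : ip Q1 x y - ip Q2 x y = ip (fun a b => Q1 a b - Q2 a b) x y.
Proof.
rewrite /ip -sumrB; apply: eq_bigr => a _; rewrite -sumrB; apply: eq_bigr => b _.
by rewrite mulrBr.
Qed.

Lemma ip_suml (I : Type) (s : seq I) (w : I -> R) Q (x : I -> A -> R) y :
  \sum_(t <- s) w t * ip Q (x t) y = ip Q (fun a => \sum_(t <- s) w t * x t a) y.
Proof.
rewrite /ip; under eq_bigr do rewrite mulr_sumr.
rewrite exchange_big; apply: eq_bigr => a _; under eq_bigr do rewrite mulr_sumr.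
rewrite exchange_big; apply: eq_bigr => b _.
by rewrite !mulr_suml; apply: eq_bigr => t _; rewrite !mulrA.
Qed.

Lemma ip_sumr (I : Type) (s : seq I) (w : I -> R) Q x (y : I -> B -> R) :
  \sum_(t <- s) w t * ip Q x (y t) = ip Q x (fun b => \sum_(t <- s) w t * y t b).
Proof.
rewrite /ip; under eq_bigr do rewrite mulr_sumr.
rewrite exchange_big; apply: eq_bigr => a _; under eq_bigr do rewrite mulr_sumr.
rewrite exchange_big; apply: eq_bigr => b _.
by rewrite mulr_sumr mulr_suml; apply: eq_bigr => t _; rewrite !mulrA [w t * x a]mulrC.
Qed.

End InnerProduct.

Section GameValue.
Variables (R : realType) (A B : finType).
Local Open Scope classical_set_scope.
Implicit Types (Q : A -> B -> R).

Definition game_value Q : R :=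
  sup [set inf [set ip Q x y | y in simplex B] | x in simplex A].

Lemma inf_le_game_value Q x : simplex A x ->
  inf [set ip Q x y | y in simplex B] <= game_value Q.
Proof.
move=> sx; set M := \sum_a \sum_b `|Q a b|.
have ipM u v : simplex A u -> simplex B v -> - M <= ip Q u v <= M.
  by move=> su sv; rewrite -ler_norml; exact: ip_norm_le_l1.
apply: (le_sup_image (f := fun u => inf [set ip Q u y | y in simplex B]) (M := M) sx) => u su.
case: (pselect (exists v : B -> R, simplex B v)) => [[v sv]|nB].
  apply: le_trans (inf_image_le (f := ip Q u) (M := - M) sv _) _; last by case/andP: (ipM u v su sv).
  by move=> y sy; case/andP: (ipM u y su sy).
have -> : simplex B = set0 :> set (B -> R) by apply/seteqP; split=> // v sv; apply: nB; exists v.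
by rewrite image_set0 inf0 sumr_ge0 // => a _; rewrite sumr_ge0.
Qed.

Lemma game_value_le_sup Q y : simplex B y ->
  game_value Q <= sup [set ip Q x y | x in simplex A].
Proof.
move=> sy; rewrite /game_value; set M := \sum_a \sum_b `|Q a b|.
have ipM u v : simplex A u -> simplex B v -> - M <= ip Q u v <= M.
  by move=> su sv; rewrite -ler_norml; exact: ip_norm_le_l1.
case: (pselect (exists x : A -> R, simplex A x)) => [A0|nA].
  apply: (sup_image_le (f := fun x => inf [set ip Q x y | y in simplex B])) A0 _ => x sx.
  apply: le_trans (inf_image_le (f := ip Q x) (M := - M) sy _)
                  (le_sup_image (f := ip Q ^~ y) (M := M) sx _).
    by move=> v sv; case/andP: (ipM x v sx sv).
  by move=> u su; case/andP: (ipM u y su sy).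
have -> : simplex A = set0 :> set (A -> R) by apply/seteqP; split=> // x sx; apply: nA; exists x.
by rewrite !image_set0.
Qed.

Lemma game_value0 : game_value (fun _ _ => 0) = 0.
Proof.
have ip0 x y : ip (fun (_ : A) (_ : B) => 0 : R) x y = 0.
  by rewrite /ip big1 // => a _; rewrite big1 // => b _; rewrite mulr0.
rewrite /game_value; under eq_fun do under eq_fun do rewrite ip0.
by under eq_fun do rewrite inf_image_cst0; rewrite sup_image_cst0.
Qed.

End GameValue.

Section AveragedPlay.
Local Open Scope classical_set_scope.
Variables (R : realType) (A B : finType) (I : eqType) (s : seq I) (w : I -> R).
Variables (Q : A -> B -> R) (Qt : I -> A -> B -> R).
Variables (x : I -> A -> R) (y : I -> B -> R) (d : I -> R).
Hypothesis w_ge0 : {in s, forall t, 0 <= w t}.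
Hypothesis w_sum1 : \sum_(t <- s) w t = 1.
Hypothesis x_simplex : {in s, forall t, simplex A (x t)}.
Hypothesis y_simplex : {in s, forall t, simplex B (y t)}.
Hypothesis Qt_near : {in s, forall t a b, `|Qt t a b - Q a b| <= d t}.

Let play := \sum_(t <- s) w t * ip (Qt t) (x t) (y t).
Let D := \sum_(t <- s) w t * d t.
Let M := \sum_a \sum_b `|Q a b|.

Let ler_wsum (f g : I -> R) : {in s, forall t, f t <= g t} ->
  \sum_(t <- s) w t * f t <= \sum_(t <- s) w t * g t.
Proof.
by move=> fg; rewrite big_seq [leRHS]big_seq; apply: ler_sum => t st; rewrite ler_wpM2l ?w_ge0 ?fg.
Qed.

Let ip_bounds u v : simplex A u -> simplex B v -> - M <= ip Q u v <= M.
Proof. by move=> su sv; rewrite -ler_norml; exact: ip_norm_le_l1. Qed.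

Let ip_near t u v : t \in s -> simplex A u -> simplex B v ->
  ip Q u v - d t <= ip (Qt t) u v <= ip Q u v + d t.
Proof.
move=> st su sv; have := ip_norm_le (Qt_near st) su sv.
by rewrite -ipB ler_norml => /andP[? ?]; apply/andP; split; lra.
Qed.

Lemma averaged_play_le_value rho :
  play - inf [set \sum_(t <- s) w t * ip (Qt t) (x t) z | z in simplex B] <= rho ->
  play <= game_value Q + D + rho.
Proof.
set xbar := fun a => \sum_(t <- s) w t * x t a.
have sxbar : simplex A xbar by exact: simplex_avg.
set ybar := fun b => \sum_(t <- s) w t * y t b.
have sybar : simplex B ybar by exact: simplex_avg.
move=> reg_le.
have inf_play_le : inf [set \sum_(t <- s) w t * ip (Qt t) (x t) z | z in simplex B]
                   <= inf [set ip Q xbar z | z in simplex B] + D.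
  apply: (inf_image_leD (M := \sum_(t <- s) w t * (- M - d t))); first by exists ybar.
    move=> z sz; apply: ler_wsum => t st.
    by have := ip_near st (x_simplex st) sz; have := ip_bounds (x_simplex st) sz; lra.
  move=> z sz; rewrite /xbar -ip_suml /D -big_split /=.
  under [leRHS]eq_bigr do rewrite -mulrDr.
  apply: ler_wsum => t st.
  by case/andP: (ip_near st (x_simplex st) sz).
have := inf_le_game_value Q sxbar; lra.
Qed.

Lemma value_le_averaged_play rho :
  sup [set \sum_(t <- s) w t * ip (Qt t) z (y t) | z in simplex A] - play <= rho ->
  game_value Q <= play + D + rho.
Proof.
set xbar := fun a => \sum_(t <- s) w t * x t a.
have sxbar : simplex A xbar by exact: simplex_avg.
set ybar := fun b => \sum_(t <- s) w t * y t b.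
have sybar : simplex B ybar by exact: simplex_avg.
move=> reg_le.
have sup_le_play : sup [set ip Q z ybar | z in simplex A]
                   <= sup [set \sum_(t <- s) w t * ip (Qt t) z (y t) | z in simplex A] + D.
  apply: (sup_image_leD (M := \sum_(t <- s) w t * (M + d t))); first by exists xbar.
    move=> z sz; apply: ler_wsum => t st.
    by have := ip_near st sz (y_simplex st); have := ip_bounds sz (y_simplex st); lra.
  move=> z sz; rewrite /ybar -ip_sumr /D -big_split /=.
  under [leRHS]eq_bigr do rewrite -mulrDr.
  apply: ler_wsum => t st.
  by have := ip_near st sz (y_simplex st); lra.
have := game_value_le_sup Q sybar; lra.
Qed.

Lemma averaged_play_near_value rho :
  sup [set \sum_(t <- s) w t * ip (Qt t) z (y t) | z in simplex A] - play <= rho ->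
  play - inf [set \sum_(t <- s) w t * ip (Qt t) (x t) z | z in simplex B] <= rho ->
  `|play - game_value Q| <= D + rho.
Proof.
move=> reg_max reg_min; have := value_le_averaged_play reg_max.
by have := averaged_play_le_value reg_min; rewrite ler_norml => ? ?; apply/andP; split; lra.
Qed.

End AveragedPlay.

Section LearningRateWeights.
Variables (R : realType) (alpha : nat -> R).

Lemma alphakt_diag k : alphakt alpha k k = alpha k.
Proof. by rewrite /alphakt big_geq // mulr1. Qed.

Lemma alphakt_sumS (F : nat -> R) k :
  \sum_(1 <= t < k.+2) alphakt alpha k.+1 t * F t =
  (1 - alpha k.+1) * \sum_(1 <= t < k.+1) alphakt alpha k t * F t + alpha k.+1 * F k.+1.
Proof.
rewrite big_nat_recr //= alphakt_diag mulr_sumr big_nat_cond [in RHS]big_nat_cond.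
congr (_ + _); apply: eq_bigr => t /andP[/andP[_ tk] _].
by rewrite /alphakt big_nat_recr //=; ring.
Qed.

Hypothesis alpha1 : alpha 1%N = 1.

Lemma alphakt_sum1 (F : nat -> R) : \sum_(1 <= t < 2) alphakt alpha 1 t * F t = F 1%N.
Proof. by rewrite big_nat1 alphakt_diag alpha1 mul1r. Qed.

Lemma sum_alphakt k : (1 <= k)%N -> \sum_(1 <= t < k.+1) alphakt alpha k t = 1.
Proof.
case: k => // k _; under eq_bigr do rewrite -[alphakt _ _ _]mulr1.
elim: k => [|k IH]; first exact: alphakt_sum1.
by rewrite alphakt_sumS IH !mulr1 subrK.
Qed.

Hypothesis alpha_01 : forall k, (1 <= k)%N -> 0 <= alpha k <= 1.

Lemma alphakt_ge0 k t : (1 <= t)%N -> 0 <= alphakt alpha k t.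
Proof.
move=> t1; have /andP[a0 _] := alpha_01 t1.
rewrite /alphakt mulr_ge0 // big_nat_cond prodr_ge0 // => j /andP[/andP[tj _] _].
by have /andP[_ aj] := alpha_01 (leq_trans t1 (ltnW tj)); rewrite subr_ge0.
Qed.

Lemma ler_alphakt_sum (F G : nat -> R) k : (forall t, (1 <= t <= k)%N -> F t <= G t) ->
  \sum_(1 <= t < k.+1) alphakt alpha k t * F t <= \sum_(1 <= t < k.+1) alphakt alpha k t * G t.
Proof.
move=> FG; rewrite big_nat_cond [leRHS]big_nat_cond; apply: ler_sum => t /andP[/andP[t1 tk] _].
by rewrite ler_wpM2l ?alphakt_ge0 // FG // t1 -ltnS.
Qed.

End LearningRateWeights.

Section OnePlusInvPower.
Variable R : realFieldType.

Lemma exprn_1D_le (x : R) j : 0 <= x -> j%:R * x <= 1 ->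
  (1 + x) ^+ j <= 1 + j%:R * x + (j%:R * x) ^+ 2.
Proof.
move=> x0; elim: j => [|j IH] jx1; first by rewrite expr0 !mul0r expr0n /= !addr0.
rewrite -natr1 in jx1 *; set n := j%:R in IH jx1 *.
have n0 : 0 <= n by [].
have nx1 : n * x <= 1 by lra.
rewrite exprSr; apply: le_trans (ler_wpM2r _ (IH nx1)) _; first lra.
(* The remainder is x^2 ((n + 1) - n^2 x) >= 0, since n^2 x <= n. *)
have nnx : n * (n * x) * x ^+ 2 <= n * x ^+ 2 by rewrite ler_wpM2r ?sqr_ge0 // ler_piMr.
rewrite !expr2 in nnx *; nra.
Qed.

Lemma exprn_1DV_le3 n : (0 < n)%N -> (1 + n%:R^-1) ^+ n <= 3 :> R.
Proof.
move=> n0; have n0' : 0 < n%:R :> R by rewrite ltr0n.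
have nn1 : n%:R * n%:R^-1 = 1 :> R by rewrite mulfV ?gt_eqF.
apply: le_trans (exprn_1D_le _ _) _; rewrite ?invr_ge0 ?(ltW n0') ?nn1 //.
by rewrite expr1n; lra.
Qed.

End OnePlusInvPower.

Section RunningMeans.
Variables (R : realType) (H : nat) (alpha : nat -> R).
Hypothesis H_gt0 : (0 < H)%N.
Hypothesis alphaE : forall k, (1 <= k)%N -> alpha k = H.+1%:R / (H + k)%:R.

Let running_mean_step (h n W F1 F2 : R) : 0 < h -> 0 < n -> 0 <= F1 <= F2 ->
  W <= (1 + h^-1) * (F1 / n) ->
  (1 - (h + 1) / (h + (n + 1))) * W + (h + 1) / (h + (n + 1)) * (F2 / (n + 1))
  <= (1 + h^-1) * (F2 / (n + 1)).
Proof.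
move=> h0 n0 /andP[F10 F12] W_le; have hn0 : 0 < h + (n + 1) by lra.
have -> : 1 - (h + 1) / (h + (n + 1)) = n / (h + (n + 1)) by field; rewrite gt_eqF.
apply: le_trans (_ : n / (h + (n + 1)) * ((1 + h^-1) * (F2 / n))
                     + (h + 1) / (h + (n + 1)) * (F2 / (n + 1)) <= _).
  rewrite lerD2r; apply: ler_wpM2l; first by rewrite divr_ge0 ?ltW.
  apply: le_trans W_le _; apply: ler_wpM2l; first by rewrite addr_ge0 ?invr_ge0 ?ltW.
  by apply: ler_wpM2r; rewrite // invr_ge0 ltW.
by rewrite le_eqVlt; apply/orP; left; apply/eqP; field; rewrite !gt_eqF //; lra.
Qed.

Lemma rescaled_rate1 : alpha 1%N = 1.
Proof. by rewrite alphaE // addn1 mulfV // pnatr_eq0. Qed.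

Lemma alphakt_sum_means_le (F : nat -> R) k :
  (forall t, 0 <= F t) -> (forall t, F t <= F t.+1) -> (1 <= k)%N ->
  \sum_(1 <= t < k.+1) alphakt alpha k t * (F t / t%:R) <= (1 + H%:R^-1) * (F k / k%:R).
Proof.
move=> F0 Fle; case: k => // k _; elim: k => [|k IH].
  by rewrite alphakt_sum1 ?rescaled_rate1 // !divr1 ler_peMl // lerDl invr_ge0.
have eH : H.+1%:R = H%:R + 1 :> R by rewrite -natr1.
have ek : k.+2%:R = k.+1%:R + 1 :> R by rewrite -natr1.
have eHk : (H + k.+2)%:R = H%:R + (k.+1%:R + 1) :> R by rewrite natrD ek.
rewrite alphakt_sumS alphaE // eH eHk ek.
by apply: (running_mean_step (F1 := F k.+1)); rewrite ?ltr0n ?F0 ?Fle.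
Qed.
End RunningMeans.

Section MarkovGame.
Local Open Scope classical_set_scope.
Variables (R : realType) (S A B : finType) (H : nat).
Variables (r : nat -> S -> A -> B -> R) (P : nat -> S -> A -> B -> S -> R).
Variables (alpha : nat -> R) (mu : nat -> nat -> S -> A -> R) (nu : nat -> nat -> S -> B -> R).

Local Notation Q := (Qk H r P alpha mu nu).
Local Notation Qs := (Qstar H r P).
Local Notation dl := (delta H r P alpha mu nu).
Local Notation reg := (reg H r P alpha mu nu).

Definition Vk t h s : R := ip (Q t h s) (mu t h s) (nu t h s).
Definition Vstar h s : R := game_value (Qs h s).

Lemma Qstar_unfold h s a b : (1 <= h <= H)%N ->
  Qs h s a b = r h s a b + Pf P h (Vstar h.+1) s a b.
Proof.
case/andP=> h1 hH; rewrite /Qstar (_ : (H.+1 - h = (H - h).+1)%N) ?subSn //=.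
by rewrite subKn // subSS.
Qed.

Lemma Qstar_end : Qs H.+1 = fun _ _ _ => 0.
Proof. by rewrite /Qstar subnn. Qed.

Lemma Qk_unfold k h s a b : (1 <= h <= H)%N ->
  Q k.+1 h s a b = (1 - alpha k.+1) * Q k h s a b
                   + alpha k.+1 * (r h s a b + Pf P h (Vk k.+1 h.+1) s a b).
Proof.
case/andP=> h1 hH; rewrite [LHS]/= (_ : (H.+1 - h = (H - h).+1)%N) ?subSn //=.
by rewrite subKn // subSS.
Qed.

Lemma Qk_end k : (1 <= k)%N -> Q k H.+1 = fun _ _ _ => 0.
Proof. by case: k => // k _; rewrite /= subnn. Qed.

Lemma delta_ge0 h k : 0 <= dl h k.
Proof.
rewrite /delta; elim: (index_enum S) => [|s ss IH]; rewrite ?big_nil ?big_cons //.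
by rewrite le_max IH orbT.
Qed.

Lemma le_delta h k s a b : `|Q k h s a b - Qs h s a b| <= dl h k.
Proof.
rewrite /delta; apply: le_trans (le_bigmax _ _ s); apply: le_trans (le_bigmax _ _ a).
exact: (le_bigmax _ _ b).
Qed.

Lemma delta_le h k c : 0 <= c ->
  (forall s a b, `|Q k h s a b - Qs h s a b| <= c) -> dl h k <= c.
Proof.
move=> c0 Qc; rewrite /delta; apply: bigmax_le => // s _; apply: bigmax_le => // a _.
exact: bigmax_le.
Qed.

Lemma delta_end k : (1 <= k)%N -> dl H.+1 k = 0.
Proof.
move=> k1; apply/eqP; rewrite eq_le delta_ge0 andbT; apply: delta_le => // s a b.
by rewrite Qk_end // Qstar_end subrr normr0.
Qed.

Lemma reg_end k : reg H.+1 k = 0.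
Proof. by rewrite /reg eqxx. Qed.

Lemma reg_ge h k s : (h <= H)%N ->
  reg_mu H r P alpha mu nu h k s <= reg h k /\ reg_nu H r P alpha mu nu h k s <= reg h k.
Proof.
move=> hH; rewrite /reg ifN ?neq_ltn ?ltnS ?hH //.
set f := fun s => Num.max (reg_mu H r P alpha mu nu h k s) (reg_nu H r P alpha mu nu h k s).
have : f s <= sup [set f s | s in [set: S]].
  apply: (le_sup_image (M := \sum_s `|f s|)) => // s' _.
  rewrite (bigD1 s') //=; apply: le_trans (ler_norm _) _.
  by rewrite lerDl sumr_ge0.
by rewrite ge_max => /andP[].
Qed.

Hypothesis alpha_01 : forall k, (1 <= k)%N -> 0 <= alpha k <= 1.
Hypothesis alpha1 : alpha 1%N = 1.
Hypothesis policy_simplex : forall k h s, (1 <= k)%N -> (1 <= h <= H)%N ->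
  simplex A (mu k h s) /\ simplex B (nu k h s).
Hypothesis P_stochastic : forall h s a b, (1 <= h <= H)%N ->
  (forall s', 0 <= P h s a b s') /\ \sum_s' P h s a b s' = 1.

Lemma Qk_alphakt_sum k h s a b : (1 <= k)%N -> (1 <= h <= H)%N ->
  Q k h s a b = \sum_(1 <= t < k.+1) alphakt alpha k t * (r h s a b + Pf P h (Vk t h.+1) s a b).
Proof.
case: k => // k _ hh; elim: k => [|k IH].
  by rewrite alphakt_sum1 // Qk_unfold // alpha1 subrr mul0r add0r mul1r.
by rewrite alphakt_sumS Qk_unfold // IH.
Qed.

Lemma Pf_norm_le h s a b (f : S -> R) c : (1 <= h <= H)%N ->
  (forall s', `|f s'| <= c) -> `|Pf P h f s a b| <= c.
Proof.
move=> hh fc; have [P0 P1] := P_stochastic s a b hh; rewrite /Pf.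
apply: le_trans (ler_norm_sum _ _ _) _.
rewrite -[c]mul1r -P1 mulr_suml; apply: ler_sum => s' _.
by rewrite normrM ger0_norm // ler_wpM2l.
Qed.

Lemma Qk_sub_Qstar k h s a b : (1 <= k)%N -> (1 <= h <= H)%N ->
  Q k h s a b - Qs h s a b =
  Pf P h (fun s' => \sum_(1 <= t < k.+1) alphakt alpha k t * Vk t h.+1 s' - Vstar h.+1 s') s a b.
Proof.
move=> k1 hh; rewrite Qk_alphakt_sum // Qstar_unfold //.
under eq_bigr do rewrite mulrDr.
rewrite big_split /= -mulr_suml sum_alphakt // mul1r opprD addrACA subrr add0r.
rewrite /Pf; under [RHS]eq_bigr do rewrite mulrBr.
rewrite sumrB; congr (_ - _).
under eq_bigr do rewrite mulr_sumr.
rewrite exchange_big /=; apply: eq_bigr => s' _; rewrite mulr_sumr; apply: eq_bigr => t _.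
by rewrite mulrCA.
Qed.

Lemma Vk_near_Vstar k h s : (1 <= k)%N -> (1 <= h <= H)%N ->
  `|\sum_(1 <= t < k.+1) alphakt alpha k t * Vk t h s - Vstar h s|
  <= \sum_(1 <= t < k.+1) alphakt alpha k t * dl h t + reg h k.
Proof.
move=> k1 hh; have [reg_mu_le reg_nu_le] := reg_ge k s (proj2 (andP hh)).
have t_ge1 t : t \in index_iota 1 k.+1 -> (1 <= t)%N by rewrite mem_index_iota => /andP[].
apply: averaged_play_near_value reg_mu_le reg_nu_le.
- by move=> t /t_ge1; exact: alphakt_ge0.
- exact: sum_alphakt.
- by move=> t /t_ge1 t1; have [] := policy_simplex s t1 hh.
- by move=> t /t_ge1 t1; have [] := policy_simplex s t1 hh.
- by move=> t _ a b; exact: le_delta.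
Qed.

Lemma Vk_end t s : (1 <= t)%N -> Vk t H.+1 s = 0.
Proof.
move=> t1; rewrite /Vk Qk_end // /ip big1 // => a _.
by rewrite big1 // => b _; rewrite mulr0.
Qed.

Lemma Vstar_end s : Vstar H.+1 s = 0.
Proof. by rewrite /Vstar Qstar_end game_value0. Qed.

Lemma delta_recursion k h : (1 <= k)%N -> (1 <= h <= H)%N ->
  dl h k <= \sum_(1 <= t < k.+1) alphakt alpha k t * dl h.+1 t + reg h.+1 k.
Proof.
move=> k1 hh; set c := (X in _ <= X).
have next_err s' :
    `|\sum_(1 <= t < k.+1) alphakt alpha k t * Vk t h.+1 s' - Vstar h.+1 s'| <= c.
  have [hH|Hh] := ltnP h H; first by apply: Vk_near_Vstar; rewrite // ltnS ltnW.
  have eh : h = H by apply/eqP; rewrite eqn_leq Hh (proj2 (andP hh)).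
  rewrite /c eh Vstar_end reg_end.
  rewrite big_nat_cond big1 => [|t /andP[/andP[t1 _] _]]; last by rewrite Vk_end // mulr0.
  rewrite big_nat_cond big1 => [|t /andP[/andP[t1 _] _]]; last by rewrite delta_end // mulr0.
  by rewrite subrr normr0 addr0.
case: (pselect (exists s : S, True)) => [[s0 _]|S0].
  apply: delta_le => [|s a b]; first exact: le_trans (normr_ge0 _) (next_err s0).
  by rewrite Qk_sub_Qstar //; apply: Pf_norm_le.
(* Without states, delta is an empty max (0) and reg_{h+1}^k is sup set0 = 0. *)
have setT0 : [set: S] = set0 by apply/seteqP; split=> // s _; apply: S0; exists s.
rewrite /delta /c /reg big_pred0 => [|s]; last by apply/negP => _; apply: S0; exists s.
rewrite setT0 image_set0 sup0 if_same addr0 big_nat_cond sumr_ge0 // => t /andP[/andP[t1 _] _].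
by rewrite mulr_ge0 ?alphakt_ge0 ?delta_ge0.
Qed.

End MarkovGame.

Section RescaledRates.
Variables (R : realType) (S A B : finType) (H : nat).
Variables (r : nat -> S -> A -> B -> R) (P : nat -> S -> A -> B -> S -> R).
Variables (alpha : nat -> R) (mu : nat -> nat -> S -> A -> R) (nu : nat -> nat -> S -> B -> R).
Variable regb : nat -> R.

Local Notation dl := (delta H r P alpha mu nu).

Hypothesis H_gt0 : (0 < H)%N.
Hypothesis alpha_01 : forall k, (1 <= k)%N -> 0 <= alpha k <= 1.
Hypothesis policy_simplex : forall k h s, (1 <= k)%N -> (1 <= h <= H)%N ->
  simplex A (mu k h s) /\ simplex B (nu k h s).
Hypothesis P_stochastic : forall h s a b, (1 <= h <= H)%N ->
  (forall s', 0 <= P h s a b s') /\ \sum_s' P h s a b s' = 1.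
Hypothesis alphaE : forall k, (1 <= k)%N -> alpha k = H.+1%:R / (H + k)%:R.
Hypothesis regb_ge0 : forall k, (1 <= k)%N -> 0 <= regb k.
Hypothesis regb_noninc : forall k, (1 <= k)%N -> regb k.+1 <= regb k.
Hypothesis reg_le_regb : forall h k, (1 <= h <= H.+1)%N -> (1 <= k)%N ->
  reg H r P alpha mu nu h k <= regb k.

Let cumreg k := \sum_(1 <= t < k.+1) regb t.

Let cumreg_ge0 k : 0 <= cumreg k.
Proof. by rewrite /cumreg big_nat_cond sumr_ge0 // => t /andP[/andP[t1 _] _]; apply: regb_ge0. Qed.

Let cumregS k : cumreg k <= cumreg k.+1.
Proof. by rewrite /cumreg [leRHS]big_nat_recr //= lerDl regb_ge0. Qed.

Let regb_le t k : (1 <= t <= k)%N -> regb k <= regb t.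
Proof.
case/andP=> t1; elim: k => [|k IH]; first by rewrite leqn0 => /eqP t0; rewrite t0 in t1.
rewrite leq_eqVlt => /orP[/eqP -> //|]; rewrite ltnS => tk.
exact: le_trans (regb_noninc (leq_trans t1 tk)) (IH tk).
Qed.

Lemma regb_le_mean k : (1 <= k)%N -> regb k <= cumreg k / k%:R.
Proof.
move=> k1; rewrite ler_pdivlMr ?ltr0n //.
have : \sum_(1 <= t < k.+1) regb k <= cumreg k.
  rewrite /cumreg big_nat_cond [leRHS]big_nat_cond.
  by apply: ler_sum => t /andP[tk _]; apply: regb_le; rewrite -ltnS.
by rewrite sumr_const_nat subn1 /= mulr_natr.
Qed.

Definition err_coef n : R := H%:R * ((1 + H%:R^-1) ^+ n - 1).

Lemma err_coef_ge0 n : 0 <= err_coef n.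
Proof. by rewrite /err_coef mulr_ge0 // subr_ge0 exprn_ege1 // lerDl invr_ge0. Qed.

Lemma err_coefS n : err_coef n.+1 = err_coef n * (1 + H%:R^-1) + 1.
Proof. by rewrite /err_coef exprS; field; rewrite pnatr_eq0 -lt0n. Qed.

Lemma err_coef_le n : (n <= H)%N -> err_coef n <= 2 * H%:R.
Proof.
move=> nH; have H0 : 0 < H%:R :> R by rewrite ltr0n.
have : (1 + H%:R^-1) ^+ n <= 3 :> R.
  apply: le_trans (exprn_1DV_le3 R H_gt0).
  by apply: ler_weXn2l nH; rewrite lerDl invr_ge0 ltW.
by rewrite /err_coef mulrC ler_pM2r //; lra.
Qed.

Lemma delta_le_err_coef n k : (n <= H)%N -> (1 <= k)%N ->
  dl (H.+1 - n) k <= err_coef n * (cumreg k / k%:R).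
Proof.
elim: n k => [|n IH] k nH k1.
  by rewrite subn0 delta_end // mulr_ge0 ?err_coef_ge0 ?divr_ge0.
have hh : (1 <= H.+1 - n.+1 <= H)%N by rewrite subSS subn_gt0 nH leq_subr.
have eh : (H.+1 - n.+1).+1 = (H.+1 - n)%N by rewrite subSS subSn // ltnW.
apply: le_trans (delta_recursion r alpha_01 (rescaled_rate1 alphaE) policy_simplex P_stochastic k1 hh) _.
rewrite eh.
apply: le_trans (_ : err_coef n * ((1 + H%:R^-1) * (cumreg k / k%:R)) + cumreg k / k%:R <= _).
  apply: lerD.
    apply: le_trans (_ : \sum_(1 <= t < k.+1) alphakt alpha k t * (err_coef n * (cumreg t / t%:R)) <= _).
      by apply: ler_alphakt_sum => // t /andP[t1 _]; exact: IH (ltnW nH) t1.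
    under eq_bigr do rewrite mulrCA.
    rewrite -mulr_sumr; apply: ler_wpM2l; first exact: err_coef_ge0.
    exact: alphakt_sum_means_le.
  apply: le_trans (regb_le_mean k1); apply: reg_le_regb => //.
  by rewrite subn_gt0 ltnS (ltnW nH) leq_subr.
by rewrite err_coefS [leRHS]mulrDl mul1r [in leLHS]mulrA.
Qed.

Lemma delta_le_mean_regret k h : (1 <= k)%N -> (1 <= h <= H.+1)%N ->
  dl h k <= 2 * H%:R / k%:R * cumreg k.
Proof.
move=> k1 /andP[h1 hH1]; have nH : (H.+1 - h <= H)%N by rewrite leq_subLR -addn1 addnC leq_add2r.
rewrite -[h](subKn hH1); apply: le_trans (delta_le_err_coef nH k1) _.
rewrite [leRHS]mulrAC -[leRHS]mulrA.
by apply: ler_wpM2r (err_coef_le nH); rewrite divr_ge0.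
Qed.

End RescaledRates.

Theorem mainTheorem1 (R : realType) (S A B : finType) (H : nat)
  (r : nat -> S -> A -> B -> R) (P : nat -> S -> A -> B -> S -> R)
  (alpha : nat -> R) (mu : nat -> nat -> S -> A -> R) (nu : nat -> nat -> S -> B -> R) :
  (1 <= H)%N ->
  (forall h s a b, (1 <= h <= H)%N -> 0 <= r h s a b <= 1) ->
  (forall h s a b, (1 <= h <= H)%N ->
     (forall s', 0 <= P h s a b s') /\ \sum_s' P h s a b s' = 1) ->
  (forall k, (1 <= k)%N -> 0 < alpha k <= 1) ->
  alpha 1%N = 1 ->
  (forall k h s, (1 <= k)%N -> (1 <= h <= H)%N ->
     simplex A (mu k h s) /\ simplex B (nu k h s)) ->
  (forall k h, (1 <= k)%N -> (1 <= h <= H)%N ->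
     delta H r P alpha mu nu h k
     <= \sum_(1 <= t < k.+1) alphakt alpha k t * delta H r P alpha mu nu h.+1 t
        + reg H r P alpha mu nu h.+1 k)
  /\
  ((forall k, (1 <= k)%N -> alpha k = (H.+1)%:R / (H + k)%:R) ->
   forall regb : nat -> R,
     (forall k, (1 <= k)%N -> 0 <= regb k) ->
     (forall k, (1 <= k)%N -> regb k.+1 <= regb k) ->
     (forall h k, (1 <= h <= H.+1)%N -> (1 <= k)%N -> reg H r P alpha mu nu h k <= regb k) ->
     forall k h, (1 <= k)%N -> (1 <= h <= H.+1)%N ->
       delta H r P alpha mu nu h k
       <= (2 * H%:R) / k%:R * \sum_(1 <= t < k.+1) regb t).
Proof.
move=> H_gt0 _ P_stochastic alpha_bounds alpha1 policy_simplex.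
have alpha_01 k : (1 <= k)%N -> 0 <= alpha k <= 1.
  by move=> /alpha_bounds /andP[/ltW -> ->].
split=> [k h|alphaE regb regb_ge0 regb_noninc reg_le_regb k h].
  exact: delta_recursion.
exact: delta_le_mean_regret.
Qed.
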